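(* There is no binary relation $\succsim$ on $l_\infty$ that satisfies Weak order, Monotonicity, Continuity, ICRP, Convexity, ISU and IPIS and is represented by a constant equivalent $I:l_\infty\to\mathbb R$.
   Context: $l_\infty$: real bounded sequences indexed by $\mathbb N$; $\theta\in\mathbb R$ also a constant sequence; $x\ge y$ coordinatewise. A constant equivalent representing $\succsim$ is $I$ with $x\sim I(x)$ and $x\succsim y\iff I(x)\ge I(y)$. For a bijection $\sigma:\mathbb N\to\mathbb N$, $d_\sigma=(d_{\sigma(0)},d_{\sigma(1)},\dots)$. Weak order: complete, transitive. Monotonicity: $x\ge y\Rightarrow x\succsim y$, $1\succ0$. Continuity: for $x\succsim y\succsim z$ the sets $\{\alpha\in[0,1]:\alpha x+(1-\alpha)z\succsim y\}$, $\{\alpha:y\succsim\alpha x+(1-\alpha)z\}$ are closed. ICRP: $x\succsim y\Rightarrow x+\theta\succsim y+\theta$. Convexity: $x\succsim\theta,y\succsim\theta\Rightarrow\lambda x+(1-\lambda)y\succsim\theta$ for $\lambda\in[0,1]$. ISU: $x\succsim y$, $\alpha\ge0\Rightarrow\alpha x\succsim\alpha y$. IPIS: for every bijection $\sigma:\mathbb N\to\mathbb N$ and $x,d\in l_\infty$, $x+d\succsim x$ implies $x+d_\sigma\succsim x$. *)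

From Stdlib Require Import Reals Lra.
Open Scope R_scope.

Definition bounded (x : nat -> R) : Prop := exists M, forall n, Rabs (x n) <= M.

Record linf := mkLinf { lseq :> nat -> R; lbnd : bounded lseq }.

Lemma bounded_const (c : R) : bounded (fun _ => c).
Proof. exists (Rabs c); intros; lra. Qed.

Lemma bounded_add (x y : linf) : bounded (fun n => x n + y n).
Proof.
  destruct (lbnd x) as [Mx Hx]; destruct (lbnd y) as [My Hy].
  exists (Mx + My); intro n.
  eapply Rle_trans; [apply Rabs_triang|]. specialize (Hx n); specialize (Hy n); lra.
Qed.

Lemma bounded_scale (a : R) (x : linf) : bounded (fun n => a * x n).
Proof.
  destruct (lbnd x) as [Mx Hx]. exists (Rabs a * Mx); intro n.
  rewrite Rabs_mult. apply Rmult_le_compat_l; [apply Rabs_pos | apply Hx].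
Qed.

Lemma bounded_comp (f : nat -> nat) (x : linf) : bounded (fun n => x (f n)).
Proof. destruct (lbnd x) as [Mx Hx]. exists Mx; intro n; apply Hx. Qed.

Definition lconst (c : R) : linf := mkLinf (fun _ => c) (bounded_const c).
Definition ladd (x y : linf) : linf := mkLinf (fun n => x n + y n) (bounded_add x y).
Definition lscale (a : R) (x : linf) : linf := mkLinf (fun n => a * x n) (bounded_scale a x).
Definition lperm (s : nat -> nat) (d : linf) : linf :=
  mkLinf (fun n => d (s n)) (bounded_comp s d).
Definition lmix (a : R) (x z : linf) : linf := ladd (lscale a x) (lscale (1 - a) z).

Definition lge (x y : linf) : Prop := forall n, x n >= y n.

Definition bijection (s : nat -> nat) : Prop :=
  exists g : nat -> nat, (forall n, g (s n) = n) /\ (forall n, s (g n) = n).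

Section Props.
Variable pref : linf -> linf -> Prop.

Definition indiff x y := pref x y /\ pref y x.
Definition spref x y := pref x y /\ ~ pref y x.

Definition WeakOrder : Prop :=
  (forall x y, pref x y \/ pref y x) /\
  (forall x y z, pref x y -> pref y z -> pref x z).

Definition Monotonicity : Prop :=
  (forall x y, lge x y -> pref x y) /\ spref (lconst 1) (lconst 0).

Definition Continuity : Prop :=
  forall x y z, pref x y -> pref y z ->
    closed_set (fun a => 0 <= a <= 1 /\ pref (lmix a x z) y) /\
    closed_set (fun a => 0 <= a <= 1 /\ pref y (lmix a x z)).

Definition ICRP : Prop :=
  forall x y (t : R), pref x y -> pref (ladd x (lconst t)) (ladd y (lconst t)).

Definition Convexity : Prop :=
  forall x y (t l : R), pref x (lconst t) -> pref y (lconst t) -> 0 <= l <= 1 ->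
    pref (lmix l x y) (lconst t).

Definition ISU : Prop :=
  forall x y (a : R), pref x y -> 0 <= a -> pref (lscale a x) (lscale a y).

Definition IPIS : Prop :=
  forall (s : nat -> nat) (x d : linf), bijection s ->
    pref (ladd x d) x -> pref (ladd x (lperm s d)) x.

Definition ConstEquivRep (I : linf -> R) : Prop :=
  (forall x, indiff x (lconst (I x))) /\
  (forall x y, pref x y <-> I x >= I y).
End Props.

(* Let v be a 0/1 sequence with constant equivalent a, and let s be a
   bijection.  Since the constant a equals v + (a - v), IPIS moves the
   perturbation a - v to a - v o s, and translating by -a gives
   v - v o s ≿ 0.  Splitting ℕ into countably many ℤ-indexed chains and
   letting s shift each chain by one step (a "Hilbert hotel" permutation),
   the indicator v of the strictly positive half of every chain satisfies
   v - v o s = -1 exactly on the chain origins, which we place at the even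
   numbers.  Thus -1_even ≿ 0; permuting evens with odds gives -1_odd ≿ 0,
   and Convexity averages the two to the constant -1/2 ≿ 0.  By ISU and
   ICRP this yields 0 ≿ 1, contradicting Monotonicity. *)
From Pilot Require Import Defs.
From Stdlib Require Import Reals Arith Lia Lra Cantor.

Open Scope nat_scope.

Lemma div2_double_add1 (j : nat) : Nat.div2 (2 * j + 1) = j.
Proof. rewrite Nat.add_1_r; apply Nat.div2_succ_double. Qed.

Lemma nat_parity_cases (n : nat) :
  (Nat.even n = true /\ n = 2 * Nat.div2 n) \/
  (Nat.even n = false /\ n = 2 * Nat.div2 n + 1).
Proof.
  pose proof (Nat.div2_odd n) as n_eq; rewrite <- Nat.negb_even in n_eq.
  destruct (Nat.even n); [left | right]; simpl in n_eq; split; auto; lia.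
Qed.

Lemma bijection_conj (A : Type) (f : A -> nat) (g : nat -> A) (s t : A -> A) :
  (forall n, g (f n) = n) -> (forall n, f (g n) = n) ->
  (forall n, t (s n) = n) -> (forall n, s (t n) = n) ->
  bijection (fun n => f (s (g n))).
Proof.
  intros gf fg ts st; exists (fun n => f (t (g n))); split; intro n.
  - now rewrite gf, ts, fg.
  - now rewrite gf, st, fg.
Qed.

(* ℕ is split into chains indexed by [j]: the origin [Center j], then
   [Pos j i] at height [i+1] and [Neg j i] at height [-(i+1)]. *)
Inductive cell : Set :=
  | Center (j : nat)
  | Pos (j i : nat)
  | Neg (j i : nat).

Definition encode_cell (c : cell) : nat :=
  match c with
  | Center j => 2 * j
  | Pos j i => 2 * to_nat (j, 2 * i) + 1
  | Neg j i => 2 * to_nat (j, 2 * i + 1) + 1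
  end.

Definition decode_cell (n : nat) : cell :=
  if Nat.even n then Center (Nat.div2 n)
  else let (j, k) := of_nat (Nat.div2 n) in
       if Nat.even k then Pos j (Nat.div2 k) else Neg j (Nat.div2 k).

Lemma decode_encode_cell (c : cell) : decode_cell (encode_cell c) = c.
Proof.
  unfold decode_cell.
  destruct c as [j | j i | j i]; lazy beta iota delta [encode_cell].
  - now rewrite Nat.even_even, Nat.div2_double.
  - now rewrite Nat.even_odd, div2_double_add1, cancel_of_to,
                Nat.even_even, Nat.div2_double.
  - now rewrite Nat.even_odd, div2_double_add1, cancel_of_to,
                Nat.even_odd, div2_double_add1.
Qed.

Lemma encode_decode_cell (n : nat) : encode_cell (decode_cell n) = n.
Proof.
  unfold decode_cell.
  destruct (nat_parity_cases n) as [[ev_n n_eq] | [ev_n n_eq]]; rewrite ev_n.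
  - exact (eq_sym n_eq).
  - pose proof (cancel_to_of (Nat.div2 n)) as jk_eq.
    destruct (of_nat (Nat.div2 n)) as [j k].
    destruct (nat_parity_cases k) as [[ev_k k_eq] | [ev_k k_eq]];
      rewrite ev_k; lazy beta iota delta [encode_cell]; rewrite <- k_eq, jk_eq; lia.
Qed.

Definition cell_succ (c : cell) : cell :=
  match c with
  | Center j => Pos j 0
  | Pos j i => Pos j (S i)
  | Neg j 0 => Center j
  | Neg j (S i) => Neg j i
  end.

Definition cell_pred (c : cell) : cell :=
  match c with
  | Center j => Neg j 0
  | Neg j i => Neg j (S i)
  | Pos j 0 => Center j
  | Pos j (S i) => Pos j i
  end.

Lemma cell_pred_succ (c : cell) : cell_pred (cell_succ c) = c.
Proof. now destruct c as [j | j i | j [| i]]. Qed.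

Lemma cell_succ_pred (c : cell) : cell_succ (cell_pred c) = c.
Proof. now destruct c as [j | j [| i] | j i]. Qed.

Definition hotel_shift (n : nat) : nat :=
  encode_cell (cell_succ (decode_cell n)).

Lemma bijection_hotel_shift : bijection hotel_shift.
Proof.
  apply bijection_conj with (t := cell_pred).
  - exact decode_encode_cell.
  - exact encode_decode_cell.
  - exact cell_pred_succ.
  - exact cell_succ_pred.
Qed.

Definition is_pos (c : cell) : bool :=
  match c with Pos _ _ => true | _ => false end.

Lemma is_pos_hotel_shift (n : nat) :
  is_pos (decode_cell (hotel_shift n)) =
  orb (Nat.even n) (is_pos (decode_cell n)).
Proof.
  unfold hotel_shift; rewrite decode_encode_cell; unfold decode_cell.
  destruct (Nat.even n); [reflexivity |].
  destruct (of_nat (Nat.div2 n)) as [j k]; destruct (Nat.even k); [reflexivity |].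
  now destruct (Nat.div2 k).
Qed.

Lemma is_pos_even (n : nat) : Nat.even n = true -> is_pos (decode_cell n) = false.
Proof. now unfold decode_cell; intros ->. Qed.

Definition swap_parity (n : nat) : nat :=
  if Nat.even n then S n else Nat.pred n.

Lemma even_swap_parity (n : nat) : Nat.even (swap_parity n) = negb (Nat.even n).
Proof.
  unfold swap_parity.
  destruct (nat_parity_cases n) as [[ev_n n_eq] | [ev_n n_eq]]; rewrite ev_n, n_eq.
  - now rewrite Nat.even_succ, Nat.odd_mul.
  - now rewrite Nat.add_1_r, Nat.pred_succ, Nat.even_even.
Qed.

Lemma swap_parity_involutive (n : nat) : swap_parity (swap_parity n) = n.
Proof.
  unfold swap_parity at 1; rewrite even_swap_parity; unfold swap_parity.
  destruct (nat_parity_cases n) as [[ev_n _] | [ev_n n_eq]]; rewrite ev_n; simpl.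
  - reflexivity.
  - lia.
Qed.

Lemma bijection_swap_parity : bijection swap_parity.
Proof. exists swap_parity; split; apply swap_parity_involutive. Qed.

Open Scope R_scope.

Lemma bounded_indicator (P : nat -> bool) :
  Defs.bounded (fun n : nat => if P n then 1 else 0).
Proof.
  exists 1; intro n; destruct (P n); rewrite ?Rabs_R1, ?Rabs_R0; lra.
Qed.

Definition lindicator (P : nat -> bool) : linf := mkLinf _ (bounded_indicator P).

Definition neg_evens : linf := lscale (-1) (lindicator Nat.even).

Section Preference.
Variable pref : linf -> linf -> Prop.
Hypothesis pref_trans : forall x y z, pref x y -> pref y z -> pref x z.
Hypothesis pref_mono : forall x y, lge x y -> pref x y.
Hypothesis pref_icrp : ICRP pref.
Hypothesis pref_ipis : IPIS pref.
Hypothesis pref_convex : Convexity pref.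

Lemma pref_lge_l (x y z : linf) : lge x y -> pref y z -> pref x z.
Proof. intros; eapply pref_trans; [apply pref_mono |]; eassumption. Qed.

Lemma pref_lge_r (x y z : linf) : pref x y -> lge y z -> pref x z.
Proof. intros; eapply pref_trans; [| apply pref_mono]; eassumption. Qed.

Lemma pref_sub_perm_ge0 (s : nat -> nat) (x : linf) (t : R) :
  bijection s -> indiff pref x (lconst t) ->
  pref (ladd x (lscale (-1) (lperm s x))) (lconst 0).
Proof.
  intros bij_s [x_t t_x].
  set (d := ladd (lconst t) (lscale (-1) x)).
  assert (xd_x : pref (ladd x d) x)
    by (apply (pref_lge_l _ (lconst t)); [intro n; simpl; lra | exact t_x]).
  assert (xds_t : pref (ladd (ladd x (lperm s d)) (lconst (- t)))
                       (ladd (lconst t) (lconst (- t))))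
    by (apply pref_icrp, (pref_trans _ x); auto).
  apply pref_lge_l with (y := ladd (ladd x (lperm s d)) (lconst (- t))).
  - intro n; simpl; lra.
  - apply (pref_lge_r _ _ _ xds_t); intro n; simpl; lra.
Qed.

Lemma pref_perm_ge0 (s : nat -> nat) (d : linf) :
  bijection s -> pref d (lconst 0) -> pref (lperm s d) (lconst 0).
Proof.
  intros bij_s d_0.
  assert (sd_0 : pref (ladd (lconst 0) (lperm s d)) (lconst 0)).
  { apply pref_ipis; [exact bij_s |].
    apply (pref_lge_l _ d); [intro n; simpl; lra | exact d_0]. }
  eapply pref_lge_l; [| exact sd_0]; intro n; simpl; lra.
Qed.

Lemma neg_evens_ge0 (t : R) :
  indiff pref (lindicator (fun n => is_pos (decode_cell n))) (lconst t) ->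
  pref neg_evens (lconst 0).
Proof.
  intro v_t.
  eapply pref_lge_l; [| exact (pref_sub_perm_ge0 _ _ _ bijection_hotel_shift v_t)].
  intro n; simpl; rewrite is_pos_hotel_shift.
  destruct (Nat.even n) eqn:ev_n; [rewrite (is_pos_even n ev_n) |];
    destruct (is_pos (decode_cell n)); simpl; lra.
Qed.

Lemma const_neg_half_ge0 (t : R) :
  indiff pref (lindicator (fun n => is_pos (decode_cell n))) (lconst t) ->
  pref (lconst (-1/2)) (lconst 0).
Proof.
  intro v_t.
  pose proof (neg_evens_ge0 _ v_t) as evens_0.
  pose proof (pref_perm_ge0 _ _ bijection_swap_parity evens_0) as odds_0.
  apply pref_lge_l with (y := lmix (1/2) neg_evens (lperm swap_parity neg_evens)).
  - intro n; simpl; rewrite even_swap_parity; destruct (Nat.even n); simpl; lra.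
  - apply pref_convex; auto; lra.
Qed.

End Preference.

Theorem proposition8 :
  ~ (exists (pref : linf -> linf -> Prop) (I : linf -> R),
       WeakOrder pref /\ Monotonicity pref /\ Continuity pref /\ ICRP pref /\
       Convexity pref /\ ISU pref /\ IPIS pref /\ ConstEquivRep pref I).
Proof.
  intros (pref & I & [_ pref_trans] & [pref_mono [_ not_0_1]] & _ & pref_icrp &
          pref_convex & pref_isu & pref_ipis & [pref_const_equiv _]).
  pose proof (const_neg_half_ge0 pref pref_trans pref_mono pref_icrp pref_ipis
                pref_convex _ (pref_const_equiv _)) as half_0.
  apply not_0_1, (pref_lge_l _ pref_trans pref_mono _
                    (ladd (lscale 2 (lconst (-1/2))) (lconst 1))).
  - intro n; simpl; lra.
  - eapply pref_lge_r; [exact pref_trans | exact pref_mono | |].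
    + apply pref_icrp, pref_isu; [exact half_0 | lra].
    + intro n; simpl; lra.
Qed.
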